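(* Assume the standing setup. If $\lambda_1(\boldsymbol\Omega_K)\le1$ then $\mathbf g(1)=\mathbf 1_K$; if $\lambda_1(\boldsymbol\Omega_K)>1$ then $\mathbf g(1)\neq\mathbf 1_K$.
   Context: Standing setup: $K\ge1$, $\boldsymbol\rho=(\rho_k)$ with $\rho_k\in(0,1)$, $\sum\rho_k=1$; $\mathbf S_K=(s_{kl})$ symmetric with $s_{kl}>0$; $\mathbf D_{\mathbf v}$ diagonal with diagonal $\mathbf v$; $\boldsymbol\Omega_K=\mathbf D_{\boldsymbol\rho^{\odot1/2}}\mathbf S_K\mathbf D_{\boldsymbol\rho^{\odot1/2}}$, $\boldsymbol\Gamma_K=\mathbf S_K\mathbf D_{\boldsymbol\rho}$; $\lambda_1$ = largest eigenvalue. For each $N$, $[N]$ is split into consecutive blocks $B_1,\dots,B_K$ with $|B_k|/N\to\rho_k$; $\Sigma_{ij}=s_{kl}$ for $i\in B_k,j\in B_l$; $\mathbf H$ is symmetric with independent standard Gaussian entries on/above the diagonal; $\mathbf X=\mathbf H\odot\boldsymbol\Sigma^{\odot1/2}-N^{-1/2}\mathrm{Diag}(\boldsymbol\Sigma\mathbf 1)$ ($\odot$ Hadamard product); $\mu_X$ is the a.s. limiting spectral distribution of $\mathbf X/\sqrt N$. QVE: for $z\in\mathbb H_-=\{\Im z<0\}$, $\mathbf g(z)$ is the unique solution in $(\mathbb H_+)^K$ of $\mathbf 1_K=z\mathbf g-\mathbf g\odot\boldsymbol\Gamma_K(\mathbf g-\mathbf 1_K)$, with $\sum_k\rho_kg_k(z)=\int(z-\lambda)^{-1}d\mu_X(\lambda)$;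 $\mathbf g$ extends continuously to $\mathbb H_-\cup\mathbb R$ (analytically off $\mathrm{Supp}(\mu_X)$) and $\mathbf g(1)$ denotes the value of this extension at $z=1$. *)

From HB Require Import structures.
From mathcomp Require Import all_boot all_order all_algebra.
From mathcomp Require Import classical_sets reals.
From mathcomp Require Import complex.
Set Implicit Arguments. Unset Strict Implicit. Unset Printing Implicit Defensive.
Import Order.TTheory GRing.Theory Num.Theory.
Local Open Scope ring_scope.
Local Open Scope complex_scope.

Definition Omega (R : realType) (K : nat) (rho : 'I_K -> R) (S : 'M[R]_K) : 'M[R]_K :=
  \matrix_(k, l) (Num.sqrt (rho k) * S k l * Num.sqrt (rho l)).

Definition Gamma (R : realType) (K : nat) (rho : 'I_K -> R) (S : 'M[R]_K) : 'M[R]_K :=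
  \matrix_(k, l) (S k l * rho l).

(* largest eigenvalue lambda_1 of a (real symmetric) matrix: the supremum
   (= maximum, the set being finite and nonempty for symmetric A) of its
   eigenvalues *)
Definition lambda1 (R : realType) (K : nat) (A : 'M[R]_K) : R :=
  reals.sup [set a : R | eigenvalue A a]%classic.

Definition QVE (R : realType) (K : nat) (Gam : 'M[R]_K) (z : R[i]) (g : 'I_K -> R[i]) : Prop :=
  forall k : 'I_K, 1 = z * g k - g k * (\sum_(l < K) (Gam k l)%:C * (g l - 1)).

(* Put W = D_rho S D_rho; it is congruent to Omega through D_rho^(1/2), so
   lambda_1(Omega) <= 1 iff x^T W x <= sum_k rho_k x_k^2 for all real x.
   For Im z < 0 the imaginary part of the QVE reads
   Im g_k / |g_k|^2 = (Gamma Im g)_k - Im z, so v = Im g > 0 is a Schur test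
   vector for W, giving x^T W x <= sum_k rho_k x_k^2 / |g_k(z)|^2; letting z -> 1,
   (|g(1)| x)^T W (|g(1)| x) <= sum_k rho_k x_k^2.
   If g(1) = 1 this is the Rayleigh bound, hence lambda_1 <= 1.
   Conversely, if lambda_1 <= 1, the QVE at z = 1 gives m_k <= |g_k| (Gamma m)_k
   for m = |g(1) - 1|. Testing both quadratic bounds at a = m / r, r = |g(1)|^(1/2),
   forces equality in 2 r_k r_l <= 1 + r_k^2 r_l^2, so |g_k(1)| = 1 for all k.
   Finally a unimodular solution of the QVE at z = 1 is 1, since then
   Re g_k = 1 - sum_l Gamma_kl (Re g_l - 1) >= 1. *)

From HB Require Import structures.
From mathcomp Require Import all_boot all_order all_algebra.
From mathcomp Require Import classical_sets reals.
From mathcomp Require Import complex.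
From mathcomp Require Import sesquilinear spectral.
From mathcomp Require Import ring lra.
Set Implicit Arguments.
Unset Strict Implicit.
Unset Printing Implicit Defensive.
Import Order.TTheory GRing.Theory Num.Theory Normc.
Local Open Scope ring_scope.
Local Open Scope complex_scope.

Section QuadraticForm.
Variables (R : realFieldType) (K : nat).
Implicit Types (A B W : 'M[R]_K) (x y a r v d : 'I_K -> R).

Definition qform A x : R := \sum_k \sum_l x k * A k l * x l.

Lemma qform_scale A x y :
  qform A (fun k => x k * y k) = qform (\matrix_(k, l) (y k * A k l * y l)) x.
Proof. by apply: eq_bigr => k _; apply: eq_bigr => l _; rewrite mxE; ring. Qed.

Lemma qform_le_schur B v d :
  B^T = B -> (forall k l, 0 <= B k l) -> (forall k, 0 < v k) ->
  (forall k, \sum_l B k l * v l <= d k * v k) ->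
  forall x, qform B x <= \sum_k d k * x k ^+ 2.
Proof.
move=> Bsym B0 v0 Bv x.
(* Schur test: [2 x_k x_l <= x_k^2 v_l / v_k + x_l^2 v_k / v_l]. *)
pose T k l := B k l * (x k ^+ 2 * (v l / v k)).
have amgm k l : 2 * (x k * B k l * x l) <= T k l + T l k.
  have Blk : B l k = B k l by rewrite -[in LHS]Bsym mxE.
  have vk := v0 k; have vl := v0 l.
  rewrite -subr_ge0.
  have -> : T k l + T l k - 2 * (x k * B k l * x l)
            = B k l * ((x k * v l - x l * v k) ^+ 2 / (v k * v l)).
    by rewrite /T Blk; field; rewrite !gt_eqF.
  by rewrite mulr_ge0 // divr_ge0 ?sqr_ge0 // mulr_ge0 // ltW.
have rowT k : \sum_l T k l <= d k * x k ^+ 2.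
  have -> : \sum_l T k l = x k ^+ 2 / v k * \sum_l B k l * v l.
    by rewrite mulr_sumr; apply: eq_bigr => l _; rewrite /T; field; rewrite gt_eqF.
  apply: le_trans (ler_wpM2l _ (Bv k)) _; first by rewrite divr_ge0 ?sqr_ge0 ?ltW.
  by rewrite mulrCA divfK // gt_eqF.
have sumT : \sum_k \sum_l (T k l + T l k) = 2 * \sum_k \sum_l T k l.
  under eq_bigr do rewrite big_split.
  by rewrite big_split /= [X in _ + X]exchange_big /=; ring.
suff : 2 * qform B x <= 2 * \sum_k d k * x k ^+ 2 by rewrite ler_pM2l.
apply: le_trans (_ : _ <= \sum_k \sum_l (T k l + T l k)) _.
  rewrite mulr_sumr; apply: ler_sum => k _.
  by rewrite mulr_sumr; apply: ler_sum => l _; apply: amgm.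
by rewrite sumT ler_pM2l // ler_sum.
Qed.

Lemma qform_amgm_eq W a r :
  (forall k l, 0 <= W k l) -> (forall k, 0 < W k k) ->
  (forall k, 0 <= a k) -> (forall k, 0 <= r k) ->
  qform W a + qform W (fun k => r k ^+ 2 * a k) <= 2 * qform W (fun k => r k * a k) ->
  forall k, a k = 0 \/ r k = 1.
Proof.
move=> W0 Wdiag a0 r0 hW.
pose D k l := W k l * (a k * a l) * (1 - r k * r l) ^+ 2.
have D0 k l : 0 <= D k l.
  rewrite /D; apply: mulr_ge0; last exact: sqr_ge0.
  by apply: mulr_ge0; [exact: W0|exact: mulr_ge0].
have sumDE : \sum_k \sum_l D k l = qform W a + qform W (fun k => r k ^+ 2 * a k)
                                   - 2 * qform W (fun k => r k * a k).
  rewrite /qform mulr_sumr -big_split -sumrB /=; apply: eq_bigr => i _.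
  by rewrite mulr_sumr -big_split -sumrB /=; apply: eq_bigr => j _; rewrite /D; ring.
have sumD : \sum_k \sum_l D k l = 0.
  apply/le_anti; apply/andP; split; first by rewrite sumDE subr_le0.
  by apply: sumr_ge0 => i _; apply: sumr_ge0.
move=> k.
have /eqP : D k k = 0.
  have Dk := psumr_eq0P (fun i _ => sumr_ge0 _ (fun j _ => D0 i j)) sumD isT.
  exact: (psumr_eq0P (fun j _ => D0 k j) (Dk k) isT).
rewrite /D !mulf_eq0 (gt_eqF (Wdiag k)) orbb /= orbb.
case/orP => [/eqP|/eqP rr]; [by left|right].
have rk0 := r0 k; by apply/le_anti/andP; split; nra.
Qed.

Lemma le0_of_le_mul_eps (x M : R) :
  (forall e, 0 < e -> e <= 1 -> x <= e * M) -> x <= 0.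
Proof.
move=> H; rewrite leNgt; apply/negP => x0.
have xM : x <= M by rewrite -[M]mul1r H.
have xM0 : 0 < x + M by lra.
have e0 : 0 < x / (x + M) by rewrite divr_gt0.
have e1 : x / (x + M) <= 1 by rewrite ler_pdivrMr // mul1r; lra.
by have := H _ e0 e1; rewrite mulrAC ler_pdivlMr //; nra.
Qed.

Lemma qform_le_of_approx A x (b : R) :
  (forall e, 0 < e -> exists2 y, (forall k, `|y k - x k| < e) & qform A y <= b) ->
  qform A x <= b.
Proof.
move=> approx.
pose M := \sum_k \sum_l `|A k l| * (`|x k| + `|x l| + 1).
suff : qform A x - b <= 0 by rewrite subr_le0.
apply: (@le0_of_le_mul_eps _ M) => e e0 e1.
have [y yx yb] := approx e e0.
suff : qform A x - qform A y <= e * M by lra.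
rewrite /qform -sumrB /M mulr_sumr; apply: ler_sum => k _.
rewrite -sumrB mulr_sumr; apply: ler_sum => l _.
have -> : x k * A k l * x l - y k * A k l * y l
          = A k l * (x k * (x l - y l) + (x k - y k) * y l) by ring.
apply: le_trans (ler_norm _) _; rewrite normrM mulrCA ler_wpM2l //.
have dl : `|x l - y l| <= e by rewrite distrC ltW.
have dk : `|x k - y k| <= e by rewrite distrC ltW.
have yl : `|y l| <= `|x l| + 1.
  by have := ler_normD (x l) (y l - x l); rewrite addrC subrK; have := yx l; lra.
apply: le_trans (ler_normD _ _) _; rewrite !normrM.
have : `|x k| * `|x l - y l| <= `|x k| * e by apply: ler_wpM2l.
have : `|x k - y k| * `|y l| <= e * (`|x l| + 1) by apply: ler_pM.
lra.
Qed.

End QuadraticForm.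

(* The conjugation of the numClosedFieldType R[i] is [conjc], though not syntactically. *)
Lemma conjC_real_complex (R : rcfType) (x : R) : (x%:C)^*%R = x%:C.
Proof. exact: conjc_real. Qed.

Section LargestEigenvalue.
Local Open Scope sesquilinear_scope.
Variables (R : realType) (K : nat) (A : 'M[R]_K).

Lemma qform_eigenvector (a : R) (u : 'rV[R]_K) :
  u *m A = a *: u -> qform A (fun k => u 0 k) = a * \sum_k u 0 k ^+ 2.
Proof.
move=> uA; rewrite /qform exchange_big /= mulr_sumr; apply: eq_bigr => l _.
transitivity ((u *m A) 0 l * u 0 l); first by rewrite !mxE mulr_suml.
by rewrite uA mxE expr2 mulrA.
Qed.

Lemma lambda1_le_of_qform (c : R) : 0 <= c ->
  (forall x, qform A x <= c * \sum_k x k ^+ 2) -> lambda1 A <= c.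
Proof.
move=> c0 hA; rewrite /lambda1.
have [->|/set0P ne] := eqVneq [set a | eigenvalue A a]%classic set0%classic.
  by rewrite sup0.
apply: ge_sup => // a /eigenvalueP [u uA u0].
have := hA (fun k => u 0 k); rewrite (qform_eigenvector uA).
have : 0 < \sum_k u 0 k ^+ 2.
  rewrite lt_def sumr_ge0 ?andbT => [|k _]; last exact: sqr_ge0.
  apply: contra u0 => /eqP/(psumr_eq0P (fun k _ => sqr_ge0 (u 0 k))) u2.
  by apply/eqP/rowP => k; rewrite mxE; apply/eqP; rewrite -sqrf_eq0 u2.
by move=> u2; rewrite ler_pM2r.
Qed.

Hypotheses (Asym : A^T = A) (K_gt0 : (0 < K)%N).

Let Ac : 'M[R[i]]_K := map_mx (real_complex R) A.
Let P := spectralmx Ac.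
Let d := spectral_diag Ac.

Lemma Ac_hermsym : Ac \is hermsymmx.
Proof.
apply/is_hermitianmxP; rewrite expr0 scale1r.
by apply/matrixP => i j; rewrite !mxE conjC_real_complex -[in LHS]Asym mxE.
Qed.

Lemma Ac_spectral : Ac = invmx P *m diag_mx d *m P.
Proof. exact/orthomx_spectralP/hermitian_normalmx/Ac_hermsym. Qed.

Lemma spectral_diag_real i : d 0 i \is Num.real.
Proof. by have /mxOverP := hermitian_spectral_diag_real Ac_hermsym; apply. Qed.

Lemma eigenvalue_spectral_diag i : eigenvalue A (complex.Re (d 0 i)).
Proof.
have : eigenvalue Ac (d 0 i).
  apply/eigenvalueP; exists (row i P).
    have -> : row i P *m Ac = row i (diag_mx d *m P).
      by rewrite -row_mul Ac_spectral !mulmxA mulmxV ?mul1mx // spectral_unit.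
    by rewrite mul_diag_mx; apply/rowP => j; rewrite !mxE.
  apply/eqP => Pi0.
  have : row i (1%:M : 'M[R[i]]_K) = 0.
    by rewrite -(mulmxV (spectral_unit Ac)) row_mul Pi0 mul0mx.
  by move/rowP/(_ i); rewrite !mxE eqxx /= => /eqP; rewrite oner_eq0.
rewrite eigenvalue_root_char /Ac -map_char_poly -(RRe_real (spectral_diag_real i)).
by rewrite fmorph_root -eigenvalue_root_char.
Qed.

Lemma eigenvalue_in_spectral_diag a : eigenvalue A a -> exists i, a = complex.Re (d 0 i).
Proof.
case/eigenvalueP => v vA v0.
pose vc := map_mx (real_complex R) v.
pose u := vc *m invmx P.
have uD : u *m diag_mx d = a%:C *: u.
  have -> : u *m diag_mx d = vc *m Ac *m invmx P.
    by rewrite /u Ac_spectral !mulmxA mulmxK ?spectral_unit.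
  by rewrite /vc /Ac -map_mxM vA map_mxZ -scalemxAl.
have u0 : u != 0.
  apply: contra v0 => /eqP u0; apply/eqP/rowP => j.
  have : vc = u *m P by rewrite /u mulmxKV ?spectral_unit.
  by rewrite u0 mul0mx => /rowP/(_ j); rewrite !mxE => -[].
have [i ui] : exists i, u 0 i != 0.
  apply/existsP; move: u0; apply: contraR => /existsPn ui.
  apply/eqP/rowP => j; rewrite [RHS]mxE; apply/eqP.
  by have := ui j; rewrite negbK.
have /rowP/(_ i) := uD; rewrite mul_mx_diag mxE [RHS]mxE mulrC => udi.
by exists i; rewrite (mulIf ui udi).
Qed.

Lemma has_sup_eigenvalue : has_sup [set a : R | eigenvalue A a]%classic.
Proof.
split; first by exists (complex.Re (d 0 (Ordinal K_gt0))); apply: eigenvalue_spectral_diag.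
exists (\sum_i `|complex.Re (d 0 i)|) => a /eigenvalue_in_spectral_diag [i ->].
by apply: le_trans (ler_norm _) _; rewrite (bigD1 i) //= lerDl sumr_ge0.
Qed.

Lemma qform_le_lambda1 x : qform A x <= lambda1 A * \sum_k x k ^+ 2.
Proof.
(* With A = P^-1 diag(d) P, P unitary, and w = P x: x^T A x = sum_i d_i |w_i|^2
   and sum_i |w_i|^2 = |x|^2. *)
pose xc : 'rV[R[i]]_K := \row_k (x k)%:C.
pose w := P *m xc^T.
have Pu : P \is unitarymx := spectral_unitarymx Ac.
have xcA : (xc *m Ac *m xc^T) 0 0 = (qform A x)%:C.
  rewrite !mxE rmorph_sum.
  under [RHS]eq_bigr do rewrite rmorph_sum.
  rewrite [RHS]exchange_big /=; apply: eq_bigr => l _.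
  rewrite !mxE big_distrl /=; apply: eq_bigr => k _.
  by rewrite !mxE !rmorphM.
have xcP : xc *m P^t* = w^t*.
  apply/rowP => j; rewrite !mxE rmorph_sum; apply: eq_bigr => k _.
  by rewrite !mxE rmorphM /= conjC_real_complex mulrC.
have xcAd : (xc *m Ac *m xc^T) 0 0 = \sum_i d 0 i * ((w i 0)^*%R * w i 0).
  rewrite Ac_spectral invmx_unitary // !mulmxA xcP -(mulmxA _ P) -/w mxE.
  apply: eq_bigr => i _; rewrite mul_mx_diag !mxE.
  by rewrite mulrA [_ * d 0 i]mulrC.
have w2 : \sum_i (w i 0)^*%R * w i 0 = (\sum_k x k ^+ 2)%:C.
  have -> : \sum_i (w i 0)^*%R * w i 0 = (w^t* *m w) 0 0.
    by rewrite mxE; apply: eq_bigr => i _; rewrite !mxE.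
  rewrite /w -xcP -mulmxA (mulmxA _ P) -invmx_unitary // mulVmx ?spectral_unit //.
  rewrite mul1mx mxE rmorph_sum; apply: eq_bigr => k _.
  by rewrite !mxE rmorphM.
rewrite -lecR -xcA xcAd rmorphM /= -w2 mulr_sumr.
apply: ler_sum => i _.
apply: ler_wpM2r; first by rewrite mulrC mul_conjC_ge0.
rewrite -(RRe_real (spectral_diag_real i)) lecR.
exact: (sup_upper_bound has_sup_eigenvalue (eigenvalue_spectral_diag i)).
Qed.

Lemma lambda1_le (c : R) : 0 <= c ->
  lambda1 A <= c <-> forall x, qform A x <= c * \sum_k x k ^+ 2.
Proof.
move=> c0; split; last exact: lambda1_le_of_qform.
move=> lc x; apply: le_trans (qform_le_lambda1 x) _.
by rewrite ler_wpM2r // sumr_ge0 // => k _; apply: sqr_ge0.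
Qed.

End LargestEigenvalue.

Section ComplexNorm.
Variable R : rcfType.
Implicit Types (a b w : R[i]) (c : R).

Lemma normcE w : `|w| = (normc w)%:C.
Proof. by case: w. Qed.

Lemma normc_ge0 w : 0 <= normc w.
Proof. exact: (@normr_ge0 _ (Rcomplex R)). Qed.

Lemma normc_sqr w : normc w ^+ 2 = complex.Re w ^+ 2 + complex.Im w ^+ 2.
Proof. by case: w => x y; rewrite /= sqr_sqrtr // addr_ge0 ?sqr_ge0. Qed.

Lemma Re_le_normc w : complex.Re w <= normc w.
Proof.
have := normc_sqr w; have := normc_ge0 w; have := sqr_ge0 (complex.Im w).
by move=> Im2 n0 n2; rewrite leNgt; apply/negP => Rn; nra.
Qed.

Lemma normc_real c : normc c%:C = `|c|.
Proof. by rewrite /= expr0n addr0 sqrtr_sqr. Qed.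

Lemma normc_dist a b : `|normc a - normc b| <= normc (a - b).
Proof. exact: (@ler_dist_dist _ (Rcomplex R)). Qed.

Lemma normc_mulB a a' b b' :
  normc (a * b - a' * b') <= normc (a - a') * normc b' + normc a * normc (b - b').
Proof.
have -> : a * b - a' * b' = (a - a') * b' + a * (b - b') by ring.
by apply: le_trans (le_normcD _ _) _; rewrite !normcM.
Qed.

Lemma normc_sum (I : Type) (r : seq I) (F : I -> R[i]) :
  normc (\sum_(i <- r) F i) <= \sum_(i <- r) normc (F i).
Proof. exact: (@ler_norm_sum _ (Rcomplex R)). Qed.

Lemma normc_sum_scale (I : Type) (r : seq I) (c : I -> R) (F : I -> R[i]) :
  (forall i, 0 <= c i) ->
  normc (\sum_(i <- r) (c i)%:C * F i) <= \sum_(i <- r) c i * normc (F i).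
Proof.
move=> c0; apply: le_trans (normc_sum _ _) _.
by apply: ler_sum => i _; rewrite normcM normc_real ger0_norm.
Qed.

Lemma Re_realM c w : complex.Re (c%:C * w) = c * complex.Re w.
Proof. by case: w => x y /=; rewrite mul0r subr0. Qed.

Lemma Im_realM c w : complex.Im (c%:C * w) = c * complex.Im w.
Proof. by case: w => x y /=; rewrite mul0r addr0. Qed.

Lemma Re_inv w : complex.Re w^-1 = complex.Re w / normc w ^+ 2.
Proof. by rewrite normc_sqr; case: w. Qed.

Lemma Im_inv w : complex.Im w^-1 = - complex.Im w / normc w ^+ 2.
Proof. by rewrite normc_sqr; case: w => x y /=; rewrite mulNr. Qed.

End ComplexNorm.

Section QVESolutions.
Variables (R : realType) (K : nat) (Gam : 'M[R]_K).
Hypothesis Gam_ge0 : forall k l, 0 <= Gam k l.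
Implicit Types (z : R[i]) (h : 'I_K -> R[i]).

Lemma qve_neq0 z h k : QVE Gam z h -> h k != 0.
Proof.
move=> /(_ k) Q; apply/eqP => hk0; move: Q.
by rewrite hk0 mulr0 mul0r subr0 => /eqP; rewrite oner_eq0.
Qed.

Lemma qve_inv z h k : QVE Gam z h ->
  (h k)^-1 = z - \sum_l (Gam k l)%:C * (h l - 1).
Proof.
move=> Q; have hk0 := qve_neq0 k Q; apply: (mulfI hk0).
by rewrite mulfV // mulrBr [h k * z]mulrC; exact: Q k.
Qed.

Lemma qve_Re z h k : QVE Gam z h ->
  complex.Re (h k) / normc (h k) ^+ 2
  = complex.Re z - \sum_l Gam k l * (complex.Re (h l) - 1).
Proof.
move=> /(qve_inv k)/(congr1 (@complex.Re R)); rewrite Re_inv raddfB /= => ->.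
by rewrite raddf_sum; congr (_ - _); apply: eq_bigr => l _ /=; rewrite Re_realM raddfB.
Qed.

Lemma qve_Im z h k : QVE Gam z h ->
  complex.Im (h k) / normc (h k) ^+ 2
  = \sum_l Gam k l * complex.Im (h l) - complex.Im z.
Proof.
move=> /(qve_inv k)/(congr1 (@complex.Im R)); rewrite Im_inv raddfB /= mulNr => /eqP.
rewrite eqr_oppLR => /eqP ->; rewrite opprB raddf_sum; congr (_ - _).
by apply: eq_bigr => l _ /=; rewrite Im_realM raddfB /= subr0.
Qed.

Lemma qve1_defect h k : QVE Gam 1 h ->
  normc (h k - 1) <= normc (h k) * \sum_l Gam k l * normc (h l - 1).
Proof.
move=> Q.
have -> : h k - 1 = h k * \sum_l (Gam k l)%:C * (h l - 1).
  transitivity (h k - (1 * h k - h k * \sum_l (Gam k l)%:C * (h l - 1))); last by ring.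
  by rewrite -(Q k).
by rewrite normcM ler_wpM2l ?normc_ge0 // normc_sum_scale.
Qed.

Lemma qve1_unimodular h : QVE Gam 1 h -> (forall k, normc (h k) = 1) ->
  h = fun _ => 1.
Proof.
move=> Q h1.
have Re1 k : complex.Re (h k) = 1.
  apply/le_anti; rewrite -{1}(h1 k) Re_le_normc /=.
  have := qve_Re k Q; rewrite h1 expr1n divr1 /= => ->.
  suff : \sum_l Gam k l * (complex.Re (h l) - 1) <= 0 by lra.
  apply: sumr_le0 => l _; apply: mulr_ge0_le0 => //.
  by rewrite subr_le0 -(h1 l) Re_le_normc.
apply: boolp.funext => k.
have Im0 : complex.Im (h k) = 0.
  by apply/eqP; rewrite -sqrf_eq0; have := normc_sqr (h k); rewrite h1 Re1 !expr1n; lra.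
by apply/eqP; rewrite eq_complex Re1 Im0 !eqxx.
Qed.

Definition qve_rhs z h k : R[i] := z * h k - h k * \sum_l (Gam k l)%:C * (h l - 1).

Lemma qve_rhs_near z z' h h' k d :
  d <= 1 -> normc (z' - z) <= d -> (forall l, normc (h' l - h l) <= d) ->
  normc (qve_rhs z' h' k - qve_rhs z h k)
  <= d * (normc (h k) + normc z + 1 + \sum_l Gam k l * (normc (h l) + 1)
          + (normc (h k) + 1) * \sum_l Gam k l).
Proof.
move=> d1 zz' hh'; rewrite /qve_rhs.
set s := \sum_l (Gam k l)%:C * (h l - 1).
set s' := \sum_l (Gam k l)%:C * (h' l - 1).
have d0 : 0 <= d by apply: le_trans (hh' k); apply: normc_ge0.
have near_h : normc (h' k) <= normc (h k) + 1.
  by have := le_normcD (h' k - h k) (h k); rewrite subrK; have := hh' k; lra.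
have near_z : normc z' <= normc z + 1.
  by have := le_normcD (z' - z) z; rewrite subrK; lra.
have s_le : normc s <= \sum_l Gam k l * (normc (h l) + 1).
  apply: le_trans (normc_sum_scale _ _ (Gam_ge0 k)) _; apply: ler_sum => l _.
  by rewrite ler_wpM2l // (le_trans (le_normcD _ _)) // normcN normc1.
have ds : normc (s' - s) <= d * \sum_l Gam k l.
  have -> : s' - s = \sum_l (Gam k l)%:C * (h' l - h l).
    by rewrite -sumrB; apply: eq_bigr => l _; ring.
  apply: le_trans (normc_sum_scale _ _ (Gam_ge0 k)) _.
  by rewrite mulr_sumr ler_sum // => l _; rewrite [d * _]mulrC ler_wpM2l.
have dzh : normc (z' * h' k - z * h k) <= d * (normc (h k) + normc z + 1).
  apply: le_trans (normc_mulB _ _ _ _) _.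
  have := ler_wpM2r (normc_ge0 (h k)) zz'.
  have := ler_pM (normc_ge0 _) (normc_ge0 _) near_z (hh' k).
  lra.
have dhs : normc (h' k * s' - h k * s)
           <= d * \sum_l Gam k l * (normc (h l) + 1) + (normc (h k) + 1) * (d * \sum_l Gam k l).
  apply: le_trans (normc_mulB _ _ _ _) _; apply: lerD; apply: ler_pM => //;
    exact: normc_ge0.
have -> : z' * h' k - h' k * s' - (z * h k - h k * s)
          = (z' * h' k - z * h k) - (h' k * s' - h k * s) by ring.
by apply: le_trans (le_normcD _ _) _; rewrite normcN; lra.
Qed.

Lemma qve_closed z h :
  (forall e, 0 < e -> exists z' h',
     [/\ QVE Gam z' h', normc (z' - z) < e & forall l, normc (h' l - h l) < e]) ->
  QVE Gam z h.
Proof.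
move=> approx k.
suff : normc (1 - qve_rhs z h k) <= 0.
  move=> n0; apply/eqP; rewrite -subr_eq0; apply/eqP/eq0_normc/le_anti.
  by rewrite n0 normc_ge0.
apply: le0_of_le_mul_eps => d d0 d1.
have [z' [h' [Q' zz' hh']]] := approx d d0.
rewrite [X in X - _](Q' k); apply: qve_rhs_near => // [|l]; exact: ltW.
Qed.

End QVESolutions.

Section SpectralCriterion.
Variables (R : realType) (K : nat) (rho : 'I_K -> R) (S : 'M[R]_K).
Hypotheses (K_gt0 : (0 < K)%N) (rho_gt0 : forall k, 0 < rho k).
Hypotheses (Ssym : S^T = S) (S_gt0 : forall k l, 0 < S k l).

Let W : 'M[R]_K := \matrix_(k, l) (rho k * S k l * rho l).

Lemma Gamma_ge0 k l : 0 <= Gamma rho S k l.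
Proof. by rewrite mxE mulr_ge0 // ltW. Qed.

Lemma rho_Gamma k l : rho k * Gamma rho S k l = W k l.
Proof. by rewrite !mxE mulrA. Qed.

Lemma W_sym : W^T = W.
Proof. by apply/matrixP => k l; rewrite !mxE -[in LHS]Ssym mxE; ring. Qed.

Lemma W_ge0 k l : 0 <= W k l.
Proof. by rewrite mxE !mulr_ge0 // ltW. Qed.

Lemma W_diag_gt0 k : 0 < W k k.
Proof. by rewrite mxE !mulr_gt0. Qed.

Lemma lambda1_Omega_le1 :
  lambda1 (Omega rho S) <= 1 <-> forall xi, qform W xi <= \sum_k rho k * xi k ^+ 2.
Proof.
have Osym : (Omega rho S)^T = Omega rho S.
  by apply/matrixP => k l; rewrite !mxE -[in RHS]Ssym mxE; ring.
have sqrt_rho k : Num.sqrt (rho k) ^+ 2 = rho k by rewrite sqr_sqrtr // ltW.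
have qformE xi : qform (Omega rho S) (fun k => Num.sqrt (rho k) * xi k) = qform W xi.
  apply: eq_bigr => k _; apply: eq_bigr => l _; rewrite !mxE.
  by rewrite -[rho k in RHS]sqrt_rho -[rho l in RHS]sqrt_rho; ring.
have sumE xi : \sum_k (Num.sqrt (rho k) * xi k) ^+ 2 = \sum_k rho k * xi k ^+ 2.
  by apply: eq_bigr => k _; rewrite exprMn sqrt_rho.
rewrite (lambda1_le Osym K_gt0 ler01); split=> H xi.
  by rewrite -qformE -sumE -[X in _ <= X]mul1r.
have -> : xi = fun k => Num.sqrt (rho k) * (xi k / Num.sqrt (rho k)).
  by apply: boolp.funext => k; rewrite mulrC divfK // gt_eqF ?sqrtr_gt0.
by rewrite qformE sumE mul1r.
Qed.

Variable g : R[i] -> 'I_K -> R[i].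
Hypothesis g_qve : forall z : R[i], complex.Im z < 0 ->
  (forall k, 0 < complex.Im (g z k)) /\ QVE (Gamma rho S) z (g z).
Hypothesis g_cont : forall e : R, 0 < e -> exists2 d : R, 0 < d &
  forall z : R[i], complex.Im z <= 0 -> `|z - 1| < d%:C ->
    forall k, `|g z k - g 1 k| < e%:C.

Lemma g1_approx e : 0 < e -> exists z,
  [/\ complex.Im z < 0, normc (z - 1) < e & forall k, normc (g z k - g 1 k) < e].
Proof.
move=> e0; have [d d0 gd] := g_cont e0.
pose t := Num.min d e / 2.
have [t0 td te] : [/\ 0 < t, t < d & t < e].
  have := ge_min d d e; have := ge_min e d e; rewrite !lexx orbT /= => me md.
  have : 0 < Num.min d e by rewrite lt_min d0 e0.
  by rewrite /t; split; lra.
have nt : normc (1 - t *i - 1) = t.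
  by rewrite [_ - 1]addrAC subrr add0r normcN /= expr0n add0r sqrtr_sqr gtr0_norm.
have zIm : complex.Im (1 - t *i) < 0 by rewrite /=; lra.
exists (1 - t *i); split => // [|k]; first by rewrite nt.
by rewrite -ltcR -normcE gd ?(ltW zIm) // normcE nt ltcR.
Qed.

Lemma qve_g1 : QVE (Gamma rho S) 1 (g 1).
Proof.
apply: (qve_closed Gamma_ge0) => e e0.
have [z [zIm ? ?]] := g1_approx e0.
by exists z, (g z); split => //; have [] := g_qve zIm.
Qed.

Lemma qform_W_Hminus z : complex.Im z < 0 ->
  forall xi, qform W (fun k => normc (g z k) * xi k) <= \sum_k rho k * xi k ^+ 2.
Proof.
move=> zIm xi; have [v_gt0 Q] := g_qve zIm.
have n_gt0 k : 0 < normc (g z k) ^+ 2.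
  rewrite exprn_gt0 // lt_def normc_ge0 andbT.
  by apply: contra (qve_neq0 k Q) => /eqP/eq0_normc ->.
have schur k : \sum_l W k l * complex.Im (g z l)
               <= rho k / normc (g z k) ^+ 2 * complex.Im (g z k).
  rewrite mulrAC -mulrA (qve_Im k Q).
  under eq_bigr do rewrite -rho_Gamma -mulrA.
  by rewrite -mulr_sumr ler_wpM2l ?(ltW (rho_gt0 k)) // lerDl oppr_ge0 ltW.
suff -> : \sum_k rho k * xi k ^+ 2
          = \sum_k rho k / normc (g z k) ^+ 2 * (normc (g z k) * xi k) ^+ 2.
  exact: qform_le_schur W_sym W_ge0 v_gt0 schur _.
by apply: eq_bigr => k _; rewrite exprMn [RHS]mulrA divfK // gt_eqF.
Qed.

Lemma qform_W_g1 xi :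
  qform W (fun k => normc (g 1 k) * xi k) <= \sum_k rho k * xi k ^+ 2.
Proof.
rewrite qform_scale; apply: qform_le_of_approx => e e0.
have [z [zIm _ gz]] := g1_approx e0.
exists (fun k => normc (g z k)); first by move=> k; apply: le_lt_trans (normc_dist _ _) (gz k).
by rewrite -qform_scale; exact: qform_W_Hminus.
Qed.

Lemma normc_g1 : lambda1 (Omega rho S) <= 1 -> forall k, normc (g 1 k) = 1.
Proof.
move=> /lambda1_Omega_le1 HW k.
pose n k := normc (g 1 k).
pose m k := normc (g 1 k - 1).
pose r k := Num.sqrt (n k).
pose a k := m k / r k.
have n_gt0 i : 0 < n i.
  rewrite lt_def normc_ge0 andbT.
  by apply: contra (qve_neq0 i qve_g1) => /eqP/eq0_normc ->.
have r_gt0 i : 0 < r i by rewrite sqrtr_gt0.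
have r2 i : r i ^+ 2 = n i by rewrite sqr_sqrtr // ltW.
have a_ge0 i : 0 <= a i by rewrite divr_ge0 ?normc_ge0 // ltW.
have ra : (fun i => r i * a i) = m.
  by apply: boolp.funext => i; rewrite mulrC divfK // gt_eqF.
have r2a : (fun i => r i ^+ 2 * a i) = fun i => n i * a i.
  by apply: boolp.funext => i; rewrite r2.
have rho_a2 : \sum_i rho i * a i ^+ 2 <= qform W m.
  apply: ler_sum => i _.
  have -> : rho i * a i ^+ 2 = (rho i * m i / n i) * m i.
    by rewrite expr_div_n r2; field; rewrite gt_eqF.
  have -> : \sum_l m i * W i l * m l
            = (rho i * m i / n i) * (n i * \sum_l Gamma rho S i l * m l).
    rewrite mulrA divfK ?gt_eqF // mulr_sumr.
    by apply: eq_bigr => l _; rewrite -rho_Gamma; ring.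
  apply: ler_wpM2l; last exact: (qve1_defect Gamma_ge0 i qve_g1).
  exact: divr_ge0 (mulr_ge0 (ltW (rho_gt0 i)) (normc_ge0 _)) (ltW (n_gt0 i)).
have := qform_amgm_eq W_ge0 W_diag_gt0 a_ge0 (fun i => ltW (r_gt0 i)) _ k.
rewrite r2a ra; have := HW a; have := qform_W_g1 a; rewrite -/n.
move=> Hn Ha /(_ ltac:(lra)) [ak0|rk1]; last by rewrite -/(n k) -r2 rk1 expr1n.
have /eq0_normc/eqP : m k = 0.
  by move: ak0 => /eqP; rewrite mulf_eq0 invr_eq0 (gt_eqF (r_gt0 k)) orbF => /eqP.
by rewrite subr_eq0 => /eqP ->; rewrite normc1.
Qed.

Lemma g1_eq1 : lambda1 (Omega rho S) <= 1 -> g 1 = fun _ => 1.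
Proof. by move=> /normc_g1 /(qve1_unimodular Gamma_ge0 qve_g1). Qed.

Lemma g1_neq1 : 1 < lambda1 (Omega rho S) -> g 1 <> fun _ => 1.
Proof.
rewrite ltNge => /negP lt1 g11; apply/lt1/lambda1_Omega_le1 => xi.
have := qform_W_g1 xi; congr (qform _ _ <= _).
by apply: boolp.funext => k; rewrite g11 normc1 mul1r.
Qed.

End SpectralCriterion.

Theorem mainTheorem5 (R : realType) (K : nat) (rho : 'I_K -> R) (S : 'M[R]_K)
  (g : R[i] -> 'I_K -> R[i]) :
  (0 < K)%N ->
  (forall k, 0 < rho k < 1) ->
  \sum_(k < K) rho k = 1 ->
  S^T = S ->
  (forall k l, 0 < S k l) ->
  (* g solves the QVE on H_- with values in (H_+)^K (this determines g uniquely) *)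
  (forall z : R[i], complex.Im z < 0 ->
     (forall k, 0 < complex.Im (g z k)) /\ QVE (Gamma rho S) z (g z)) ->
  (* g(1) is the value at z = 1 of the continuous extension of g to H_- \cup R *)
  (forall e : R, 0 < e -> exists2 d : R, 0 < d &
     forall z : R[i], complex.Im z <= 0 -> `|z - 1| < d%:C ->
       forall k, `|g z k - g 1 k| < e%:C) ->
  (lambda1 (Omega rho S) <= 1 -> g 1 = (fun _ => 1)) /\
  (1 < lambda1 (Omega rho S) -> g 1 <> (fun _ => 1)).
Proof.
move=> K_gt0 rho_in _ Ssym S_gt0 g_qve g_cont.
have rho_gt0 k : 0 < rho k by case/andP: (rho_in k).
by split; [apply: g1_eq1 | apply: g1_neq1].
Qed.
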